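(* Consider the class of three-valued logics (as defined in the context) that are paraconsistent and have properties (a) and (b). There are exactly 16 logics in this class whose logical equivalence relation $\equiv$ satisfies, for all formulas $A,B$, all of the following: (1) $A\wedge\bot \equiv \bot$; (2) $A\vee\top\equiv\top$; (3) $A\wedge\top\equiv A$; (4) $A\vee\bot\equiv A$; (5) $A\wedge A\equiv A$; (6) $A\vee A\equiv A$; (7) $A\wedge B\equiv B\wedge A$; (8) $A\vee B\equiv B\vee A$; (9) $\neg\neg A\equiv A$.
   Context: Formulas are built from a countably infinite set of propositional variables, the constant $\bot$, the unary connective $\neg$ and the binary connectives $\wedge,\vee,\to$; $\top$ abbreviates $\neg\bot$. Let $V=\{t,f,b\}$. A three-valued logic is specified by truth functions $\neg^M:V\to V$ and $\wedge^M,\vee^M,\to^M:V^2\to V$ that agree with the classical truth functions of negation, conjunction, disjunction and material implication on $\{t,f\}$, with $\bot$ interpreted as $f$; two logics are different iff at least one of these truth functions differs. A valuation is a map $\nu$ from formulas to $V$ with $\nu(\bot)=f$, $\nu(\neg A)=\neg^M(\nu(A))$, $\nu(A\wedge B)=\wedge^M(\nu(A),\nu(B))$, and similarly for $\vee,\to$ (values on propositional variables are arbitrary). The designated values are $t$ and $b$: $\Gamma\models A$ iff for every valuation $\nu$, either $\nu(A')=f$ for some $A'\in\Gamma$ or $\nu(A)\in\{t,b\}$. The logic is paraconsistent if there are formulas $A,B$ with $\{A,\neg A\}\not\models B$. Its logical equivalence relation is: $A\equiv B$ iff $\nu(A)=\nu(B)$ for every valuation $\nu$. Property (a): for every set of formulas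 $\Gamma$ and formula $A$, $\Gamma\models A$ implies $\Gamma\models_{\mathrm{CPL}}A$, where $\models_{\mathrm{CPL}}$ is the consequence relation of classical propositional logic (with $\bot$ false, $\to$ material implication). Property (b): for all sets $\Gamma$ and formulas $A,B,C$: (b1) $\Gamma\cup\{A\}\models B$ iff $\Gamma\models A\to B$; (b2) $\Gamma\models A\wedge B$ iff $\Gamma\models A$ and $\Gamma\models B$; (b3) $\Gamma\cup\{A\vee B\}\models C$ iff $\Gamma\cup\{A\}\models C$ and $\Gamma\cup\{B\}\models C$. *)

From HB Require Import structures.
From mathcomp Require Import all_boot.
Set Implicit Arguments. Unset Strict Implicit. Unset Printing Implicit Defensive.

Inductive V := Vt | Vf | Vb.

Definition V_to_ord (x : V) : 'I_3 :=
  match x with Vt => inord 0 | Vf => inord 1 | Vb => inord 2 end.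
Definition ord_to_V (i : 'I_3) : V :=
  match val i with 0 => Vt | 1 => Vf | _ => Vb end.
Lemma V_ordK : cancel V_to_ord ord_to_V.
Proof. by case; rewrite /ord_to_V /= inordK. Qed.
HB.instance Definition _ := Equality.copy V (can_type V_ordK).
HB.instance Definition _ := Finite.copy V (can_type V_ordK).

Definition b2V (x : bool) : V := if x then Vt else Vf.

(* A three-valued "logic" (candidate): the four truth functions,
   negation, conjunction, disjunction, implication.
   Two logics are equal iff all four truth functions coincide. *)
Definition logic : Type :=
  ({ffun V -> V} * {ffun V * V -> V} * {ffun V * V -> V} * {ffun V * V -> V})%type.

Definition lneg  (L : logic) (x : V) : V := L.1.1.1 x.
Definition lconj (L : logic) (x y : V) : V := L.1.1.2 (x, y).
Definition ldisj (L : logic) (x y : V) : V := L.1.2 (x, y).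
Definition limp  (L : logic) (x y : V) : V := L.2 (x, y).

Definition classical_agree (L : logic) : Prop :=
  forall x y : bool,
    [/\ lneg L (b2V x) = b2V (~~ x),
        lconj L (b2V x) (b2V y) = b2V (x && y),
        ldisj L (b2V x) (b2V y) = b2V (x || y)
      & limp L (b2V x) (b2V y) = b2V (x ==> y)].

Inductive form :=
  | Var of nat
  | Bot
  | Neg of form
  | And of form & form
  | Or of form & form
  | Imp of form & form.

Definition Top : form := Neg Bot.

Fixpoint eval (L : logic) (v : nat -> V) (A : form) : V :=
  match A with
  | Var n => v n
  | Bot => Vf
  | Neg B => lneg L (eval L v B)
  | And B C => lconj L (eval L v B) (eval L v C)
  | Or B C => ldisj L (eval L v B) (eval L v C)
  | Imp B C => limp L (eval L v B) (eval L v C)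
  end.

Definition designated (x : V) : Prop := x = Vt \/ x = Vb.

Definition conseq (L : logic) (G : form -> Prop) (A : form) : Prop :=
  forall v : nat -> V,
    (exists A', G A' /\ eval L v A' = Vf) \/ designated (eval L v A).

Fixpoint ceval (w : nat -> bool) (A : form) : bool :=
  match A with
  | Var n => w n
  | Bot => false
  | Neg B => ~~ ceval w B
  | And B C => ceval w B && ceval w C
  | Or B C => ceval w B || ceval w C
  | Imp B C => ceval w B ==> ceval w C
  end.

Definition cpl_conseq (G : form -> Prop) (A : form) : Prop :=
  forall w : nat -> bool, (forall A', G A' -> ceval w A' = true) -> ceval w A = true.

Definition add1 (G : form -> Prop) (A : form) : form -> Prop :=
  fun C => G C \/ C = A.

Definition paraconsistent (L : logic) : Prop :=
  exists A B : form, ~ conseq L (fun C => C = A \/ C = Neg A) B.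

Definition prop_a (L : logic) : Prop :=
  forall G A, conseq L G A -> cpl_conseq G A.

Definition prop_b (L : logic) : Prop :=
  forall (G : form -> Prop) (A B C : form),
    [/\ (conseq L (add1 G A) B <-> conseq L G (Imp A B)),
        (conseq L G (And A B) <-> (conseq L G A /\ conseq L G B))
      & (conseq L (add1 G (Or A B)) C <-> (conseq L (add1 G A) C /\ conseq L (add1 G B) C))].

Definition lequiv (L : logic) (A B : form) : Prop :=
  forall v : nat -> V, eval L v A = eval L v B.

Definition in_class (L : logic) : Prop :=
  [/\ classical_agree L, paraconsistent L, prop_a L & prop_b L].

Definition equiv_laws (L : logic) : Prop :=
  forall A B : form,
    [/\ lequiv L (And A Bot) Bot,
        lequiv L (Or A Top) Top,
        lequiv L (And A Top) A,
        lequiv L (Or A Bot) A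
      & lequiv L (And A A) A] /\
    [/\ lequiv L (Or A A) A,
        lequiv L (And A B) (And B A),
        lequiv L (Or A B) (Or B A)
      & lequiv L (Neg (Neg A)) A].

From mathcomp Require Import all_boot.
From Stdlib Require Import Classical.

Set Implicit Arguments. Unset Strict Implicit. Unset Printing Implicit Defensive.

(* Classical agreement and the laws force negation, conjunction
   and disjunction to be those of Priest's LP (b is a fixed point of negation,
   conjunction and disjunction are min and max for f < b < t).  Property (b1)
   yields modus ponens, hence b -> f = f, and {B} |= A -> B, hence x -> y is
   designated whenever y is; the remaining entries b -> t, b -> b, t -> b and
   f -> b can each be t or b, giving 2^4 = 16 tables.  Conversely each of them
   is in the class: designatedness commutes with the classical connectives,
   which gives (b); valuations into {t, f} stay classical, which gives (a);
   and p = b, q = f refutes {p, ~p} |= q. *)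

Definition designatedb (x : V) : bool := if x is Vf then false else true.

Lemma designatedP x : reflect (designated x) (designatedb x).
Proof.
by case: x; constructor; rewrite /designated; [left | case | right].
Qed.

Variant V_spec : V -> Type :=
  | V_classical (x : bool) : V_spec (b2V x)
  | V_both : V_spec Vb.

Lemma VP x : V_spec x.
Proof. by case: x; [exact: (V_classical true) | exact: (V_classical false) | exact: V_both]. Qed.

Definition val2 (x y : V) : nat -> V := fun n => if n is 0 then x else y.

Section Consequence.
Variable L : logic.

Lemma conseqE G A : conseq L G A <->
  forall v, (forall B, G B -> designatedb (eval L v B)) -> designatedb (eval L v A).
Proof.
split=> [H v hG | H v].
- case: (H v) => [[B [GB eB]] | /designatedP //].
  by have := hG B GB; rewrite eB.
- case: (classic (exists B, G B /\ eval L v B = Vf)) => [|noF]; first by left.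
  right; apply/designatedP/H => B GB.
  by case eB: (eval L v B) => //; exfalso; apply: noF; exists B.
Qed.

Lemma forall_add1 G A (P : form -> Prop) :
  (forall B, add1 G A B -> P B) <-> (forall B, G B -> P B) /\ P A.
Proof.
split=> [H | [HG HA] B [/HG // | -> //]].
by split=> [B GB |]; apply: H; [left | right].
Qed.

Lemma conseq_mem G A : G A -> conseq L G A.
Proof. by move=> GA; apply/conseqE => v; apply. Qed.

End Consequence.

Section SufficientConditions.
Variable L : logic.

Lemma eval_b2V w A : classical_agree L ->
  eval L (fun n => b2V (w n)) A = b2V (ceval w A).
Proof.
move=> Lc; elim: A => [n | | B IHB | B IHB C IHC | B IHB C IHC | B IHB C IHC] //=;
  rewrite ?IHB ?IHC.
- by case: (Lc (ceval w B) true).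
all: by case: (Lc (ceval w B) (ceval w C)).
Qed.

Lemma classical_agree_prop_a : classical_agree L -> prop_a L.
Proof.
move=> Lc G A H w hw; case: (H (fun n => b2V (w n))) => [[B [GB]] | ];
  rewrite !eval_b2V //; first by rewrite hw.
by case: (ceval w A) => // -[].
Qed.

Lemma paraconsistent_neg_both : lneg L Vb = Vb -> paraconsistent L.
Proof.
move=> nb; exists (Var 0), (Var 1) => /(_ (val2 Vb Vf)).
by case=> [[B [[-> | ->]]] | []]; rewrite //= nb.
Qed.

Lemma prop_b_designatedb :
  (forall x y, designatedb (lconj L x y) = designatedb x && designatedb y) ->
  (forall x y, designatedb (ldisj L x y) = designatedb x || designatedb y) ->
  (forall x y, designatedb (limp L x y) = designatedb x ==> designatedb y) ->
  prop_b L.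
Proof.
move=> dC dD dI G A B C; split; rewrite !conseqE.
- split=> H v.
  + move=> hG; rewrite /= dI; apply/implyP => dA.
    by apply: H; apply/forall_add1.
  + by case/forall_add1 => hG dA; have := H v hG; rewrite /= dI dA.
- split=> [H | [HA HB] v hG]; last by rewrite /= dC HA ?HB.
  by split=> v hG; have := H v hG; rewrite /= dC => /andP[].
- split=> [H | [HA HB] v /forall_add1 [hG]]; last first.
    by rewrite /= dD => /orP[dA | dB]; [apply: HA | apply: HB]; apply/forall_add1.
  split=> v /forall_add1 [hG dAB]; apply: H; apply/forall_add1;
    by rewrite /= dD dAB ?orbT.
Qed.

End SufficientConditions.

Definition lp_neg (x : V) : V := match x with Vt => Vf | Vf => Vt | Vb => Vb end.

Definition lp_conj (x y : V) : V :=
  match x, y with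
  | Vf, _ | _, Vf => Vf
  | Vt, Vt => Vt
  | _, _ => Vb
  end.

Definition lp_disj (x y : V) : V :=
  match x, y with
  | Vt, _ | _, Vt => Vt
  | Vf, Vf => Vf
  | _, _ => Vb
  end.

Definition lp_imp (bt bb tb fb : V) (x y : V) : V :=
  match x, y with
  | Vt, Vf | Vb, Vf => Vf
  | Vb, Vt => bt
  | Vb, Vb => bb
  | Vt, Vb => tb
  | Vf, Vb => fb
  | _, _ => Vt
  end.

Definition lp_logic (bt bb tb fb : V) : logic :=
  ([ffun x => lp_neg x], [ffun p : V * V => lp_conj p.1 p.2],
   [ffun p : V * V => lp_disj p.1 p.2], [ffun p : V * V => lp_imp bt bb tb fb p.1 p.2]).

Section LPLogic.
Variables bt bb tb fb : V.
Let LP := lp_logic bt bb tb fb.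

Lemma lneg_lp x : lneg LP x = lp_neg x.
Proof. by rewrite /lneg ffunE. Qed.

Lemma lconj_lp x y : lconj LP x y = lp_conj x y.
Proof. by rewrite /lconj ffunE. Qed.

Lemma ldisj_lp x y : ldisj LP x y = lp_disj x y.
Proof. by rewrite /ldisj ffunE. Qed.

Lemma limp_lp x y : limp LP x y = lp_imp bt bb tb fb x y.
Proof. by rewrite /limp ffunE. Qed.

Lemma lp_classical_agree : classical_agree LP.
Proof. by case; case; rewrite lneg_lp lconj_lp ldisj_lp limp_lp. Qed.

Lemma lp_equiv_laws : equiv_laws LP.
Proof.
move=> A B; split; split=> v /=; rewrite ?lneg_lp ?lconj_lp ?ldisj_lp;
  by case: (eval LP v A); case: (eval LP v B).
Qed.

Hypothesis designated_entries :
  [&& designatedb bt, designatedb bb, designatedb tb & designatedb fb].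

Lemma lp_prop_b : prop_b LP.
Proof.
case/and4P: designated_entries => dbt dbb dtb dfb.
apply: prop_b_designatedb => x y; rewrite ?lconj_lp ?ldisj_lp ?limp_lp;
  by case: x; case: y.
Qed.

Lemma lp_in_class : in_class LP /\ equiv_laws LP.
Proof.
split; last exact: lp_equiv_laws.
split; [exact: lp_classical_agree | | | exact: lp_prop_b].
- by apply: paraconsistent_neg_both; rewrite lneg_lp.
- exact/classical_agree_prop_a/lp_classical_agree.
Qed.

End LPLogic.

Section NecessaryConditions.
Variable L : logic.
Hypotheses (Lc : classical_agree L) (Llaws : equiv_laws L).

Lemma lneg_f : lneg L Vf = Vt.
Proof. by case: (Lc false false). Qed.

Lemma lneg_lpE x : lneg L x = lp_neg x.
Proof.
case: (VP x) => [x' | ]; first by case: (Lc x' x') => -> _ _ _; case: x'.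
have [_ [_ _ _ negK]] := Llaws (Var 0) (Var 0).
have [/= neg_t _ _ _] := Lc true true.
by have := negK (fun=> Vb); rewrite /=; case: (lneg L Vb); rewrite ?neg_t ?lneg_f.
Qed.

Lemma lconj_lpE x y : lconj L x y = lp_conj x y.
Proof.
have [[bot _ top _ idem] [_ comm _ _]] := Llaws (Var 0) (Var 1).
have conj_b z : lconj L Vb z = lp_conj Vb z.
  case: z; [have := top (fun=> Vb) | exact: bot (fun=> Vb) | exact: idem (fun=> Vb)].
  by rewrite /= lneg_f.
case: (VP x) => [x' | ]; last exact: conj_b.
have conjC u w : lconj L u w = lconj L w u := comm (val2 u w).
case: (VP y) => [y' | ]; last by rewrite conjC conj_b; case: x'.
by case: (Lc x' y') => _ -> _ _; case: x'; case: y'.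
Qed.

Lemma ldisj_lpE x y : ldisj L x y = lp_disj x y.
Proof.
have [[_ top _ bot _] [idem _ comm _]] := Llaws (Var 0) (Var 1).
have disj_b z : ldisj L Vb z = lp_disj Vb z.
  case: z; [have := top (fun=> Vb) | exact: bot (fun=> Vb) | exact: idem (fun=> Vb)].
  by rewrite /= lneg_f.
case: (VP x) => [x' | ]; last exact: disj_b.
have disjC u w : ldisj L u w = ldisj L w u := comm (val2 u w).
case: (VP y) => [y' | ]; last by rewrite disjC disj_b; case: x'.
by case: (Lc x' y') => _ _ -> _; case: x'; case: y'.
Qed.

End NecessaryConditions.

Section Implication.
Variable L : logic.
Hypothesis Lb : prop_b L.

Lemma limp_both_f : limp L Vb Vf = Vf.
Proof.
have [[_ mp] _ _] := Lb (fun C => C = Imp (Var 0) (Var 1)) (Var 0) (Var 1) (Var 0).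
have /conseqE/(_ (val2 Vb Vf)) mp_bf := mp (conseq_mem L erefl).
case E: (limp L Vb Vf) => //; suff: false by [].
all: by apply: mp_bf => B [-> | ->]; rewrite /= ?E.
Qed.

Lemma designatedb_limp x y : designatedb y -> designatedb (limp L x y).
Proof.
move=> dy.
have [[weak _] _ _] := Lb (fun C => C = Var 1) (Var 0) (Var 1) (Var 0).
have /conseqE/(_ (val2 x y)) := weak (conseq_mem L (or_introl erefl)).
by apply=> B ->.
Qed.

Lemma limp_lpE : classical_agree L ->
  forall x y, limp L x y = lp_imp (limp L Vb Vt) (limp L Vb Vb) (limp L Vt Vb) (limp L Vf Vb) x y.
Proof.
move=> Lc x y; case: (VP x) => [x' | ]; case: (VP y) => [y' | ].
- by case: (Lc x' y') => _ _ _ ->; case: x'; case: y'.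
- by case: x'.
- by case: y'; rewrite // limp_both_f.
- by [].
Qed.

End Implication.

Lemma logic_lpE L bt bb tb fb :
  (forall x, lneg L x = lp_neg x) -> (forall x y, lconj L x y = lp_conj x y) ->
  (forall x y, ldisj L x y = lp_disj x y) ->
  (forall x y, limp L x y = lp_imp bt bb tb fb x y) ->
  L = lp_logic bt bb tb fb.
Proof.
case: L => [[[n c] d] i]; rewrite /lneg /lconj /ldisj /limp /= => En Ec Ed Ei.
by congr (_, _, _, _); apply/ffunP; [move=> x | move=> [x y] ..]; rewrite ffunE.
Qed.

Lemma in_class_lpE L : in_class L -> equiv_laws L ->
  L = lp_logic (limp L Vb Vt) (limp L Vb Vb) (limp L Vt Vb) (limp L Vf Vb).
Proof.
case=> Lc _ _ Lb Llaws; apply: logic_lpE.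
- exact: lneg_lpE.
- exact: lconj_lpE.
- exact: ldisj_lpE.
- exact: limp_lpE.
Qed.

Definition dval (x : bool) : V := if x then Vt else Vb.

Lemma dval_inj : injective dval. Proof. by case; case. Qed.

Lemma designatedb_dval a : designatedb (dval a).
Proof. by case: a. Qed.

Lemma dvalP x : designatedb x -> exists a, x = dval a.
Proof. by case: x => // _; [exists true | exists false]. Qed.

Definition lp_family (q : bool * bool * bool * bool) : logic :=
  let: (a, b, c, d) := q in lp_logic (dval a) (dval b) (dval c) (dval d).

Definition lp_logics : seq logic := codom lp_family.

Lemma lp_family_inj : injective lp_family.
Proof.
move=> [[[a b] c] d] [[[a' b'] c'] d'] /= E.
have entry x y := congr1 (fun L => limp L x y) E.
move: (entry Vb Vt) (entry Vb Vb) (entry Vt Vb) (entry Vf Vb); rewrite /= !limp_lp /=.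
by move=> /dval_inj -> /dval_inj -> /dval_inj -> /dval_inj ->.
Qed.

Lemma uniq_lp_logics : uniq lp_logics.
Proof. by rewrite map_inj_uniq ?enum_uniq //; exact: lp_family_inj. Qed.

Lemma size_lp_logics : size lp_logics = 16.
Proof. by rewrite size_codom !card_prod card_bool. Qed.

Lemma mem_lp_logics bt bb tb fb :
  [&& designatedb bt, designatedb bb, designatedb tb & designatedb fb] ->
  lp_logic bt bb tb fb \in lp_logics.
Proof.
case/and4P=> /dvalP[a ->] /dvalP[b ->] /dvalP[c ->] /dvalP[d ->].
exact: (codom_f lp_family (a, b, c, d)).
Qed.

Lemma lp_logics_in_class L : L \in lp_logics -> in_class L /\ equiv_laws L.
Proof. by case/codomP => -[[[a b] c] d] ->; apply: lp_in_class; rewrite !designatedb_dval. Qed.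

Theorem corollary1 :
  exists s : seq logic,
    [/\ uniq s, size s = 16
      & forall L : logic, (in_class L /\ equiv_laws L) <-> L \in s].
Proof.
exists lp_logics; split; [exact: uniq_lp_logics | exact: size_lp_logics |] => L.
split; last exact: lp_logics_in_class.
case=> Lclass Llaws; have [_ _ _ Lb] := Lclass.
rewrite (in_class_lpE Lclass Llaws); apply: mem_lp_logics.
by rewrite !designatedb_limp.
Qed.
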